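(* Let $R>r>0$ and let $K^{-1/2}_0$ and $\{\mathbb{E}(t)\}_{t\in[-1/2,1/2]}$ be as in the context. Then $\{\mathbb{E}(t)\}_{t\in[-1/2,1/2]}$ is a resolution of the identity on $K^{-1/2}_0$; namely, $$\langle f,g\rangle_{-1/2}=\int_{-1/2}^{1/2}d\langle f,\mathbb{E}(t)g\rangle_{-1/2}\quad\text{for all } f,g\in K^{-1/2}_0.$$ Moreover, $\lim_{t\to s}\mathbb{E}(t)=\mathbb{E}(s)$ for all $s\in[-1/2,1/2]$ (strongly).
   Context: Identify $\mathbb{R}^2$ with $\mathbb{C}$; for $a\in\mathbb{R}\setminus\{0\}$ let $B_a$ be the open disk of radius $|a|$ centered at $(a,0)$. Fix $R>r>0$, let $\Omega=B_R\setminus\overline{B_r}$, and put $q=\frac1{2r}-\frac1{2R}>0$. For $k\neq0$ let $\mathbb{S}(k)=\frac{1}{2|k|}\mathrm{diag}(1-e^{-|k|q},\,1+e^{-|k|q})$. $K^{-1/2}_0$ is the Hilbert space of pairs $\hat\varphi=(\hat\varphi_1,\hat\varphi_2)^T$ of measurable complex functions on $\mathbb{R}$ (mod a.e.) with $\int_{\mathbb{R}}\hat\varphi^T\mathbb{S}\overline{\hat\varphi}\,dk<\infty$, inner product $\langle\psi,\varphi\rangle_{-1/2}=\int_{\mathbb{R}}\hat\psi^T\mathbb{S}\overline{\hat\varphi}\,dk$ (in the paper such a pair represents a boundary density on $\partial\Omega$ after pulling back by $z\mapsto1/z$, Fourier transforming, and applying $P=\frac1{\sqrt2}\begin{bmatrix}-1&1\\1&1\end{bmatrix}$).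 For $s\in\mathbb{R}\cup\{\infty\}$ let $\mathcal{P}^1(s)(\hat\varphi_1,\hat\varphi_2)=(\chi_{(-\infty,s]}\hat\varphi_1,0)$, $\mathcal{P}^2(s)(\hat\varphi_1,\hat\varphi_2)=(0,\chi_{(-\infty,s]}\hat\varphi_2)$ (with $\chi_{(-\infty,\infty]}\equiv1$), $\mathbb{I}=\mathcal{P}^1(\infty)+\mathcal{P}^2(\infty)$, and $$\mathbb{E}(t)=\begin{cases}\mathcal{P}^1\!\left(-\frac{\ln(-2t)}{q}\right)-\mathcal{P}^1\!\left(\frac{\ln(-2t)}{q}\right),& t\in[-1/2,0),\\[2pt]\mathcal{P}^2\!\left(\frac{\ln(2t)}{q}\right)-\mathcal{P}^2\!\left(-\frac{\ln(2t)}{q}\right)+\mathbb{I},& t\in(0,1/2],\end{cases}\qquad \mathbb{E}(0)=\lim_{t\to0^+}\mathbb{E}(t).$$ A resolution of the identity means: each $\mathbb{E}(t)$ is an orthogonal projection, $\mathbb{E}(t)\mathbb{E}(s)=\mathbb{E}(\min(t,s))$, $\mathbb{E}$ is right-continuous, $\mathbb{E}(-1/2)=0$, $\mathbb{E}(1/2)=\mathbb{I}$. *)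

From mathcomp Require Import all_boot all_order all_algebra.
From mathcomp Require Import all_classical all_reals all_analysis.
From mathcomp Require Import complex.

Set Implicit Arguments. Unset Strict Implicit. Unset Printing Implicit Defensive.
Import Order.TTheory GRing.Theory Num.Theory.
Local Open Scope ring_scope.
Local Open Scope complex_scope.
Local Open Scope classical_set_scope.
Import numFieldNormedType.Exports.

(* A representative of an element of K^{-1/2}_0: a pair (phi_1, phi_2) of
   complex-valued functions on R (the quotient by a.e.-equality is handled by
   stating all equalities of elements a.e., see [eqK]). *)
Definition KT (R : realType) := ((R -> R[i]) * (R -> R[i]))%type.

Definition qpar (R : realType) (r Rad : R) : R := 1 / (2 * r) - 1 / (2 * Rad).

(* diagonal entries of S(k) = 1/(2|k|) diag(1 - e^{-|k|q}, 1 + e^{-|k|q}),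
   k <> 0; the value at k = 0 (a null set) is irrelevant and set to 0. *)
Definition S1 (R : realType) (q k : R) : R :=
  if k == 0 then 0 else (1 - expR (- (`|k| * q))) / (2 * `|k|).
Definition S2 (R : realType) (q k : R) : R :=
  if k == 0 then 0 else (1 + expR (- (`|k| * q))) / (2 * `|k|).

Definition sqc (R : realType) (z : R[i]) : R := (complex.Re z) ^+ 2 + (complex.Im z) ^+ 2.

Definition Kmem (R : realType) (q : R) (f : KT R) : Prop :=
  [/\ measurable_fun setT (fun k : R => complex.Re (f.1 k)),
      measurable_fun setT (fun k : R => complex.Im (f.1 k)),
      measurable_fun setT (fun k : R => complex.Re (f.2 k)),
      measurable_fun setT (fun k : R => complex.Im (f.2 k)) &
      (\int[@lebesgue_measure R]_(k in setT)
          ((S1 q k * sqc (f.1 k) + S2 q k * sqc (f.2 k))%:E) < +oo)%E].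

Definition innerK (R : realType) (q : R) (f g : KT R) : R[i] :=
  let h := fun k : R => (S1 q k)%:C * (f.1 k * (g.1 k)^*)
                      + (S2 q k)%:C * (f.2 k * (g.2 k)^*) in
  (Rintegral (@lebesgue_measure R) setT (fun k => complex.Re (h k)))%:C
  + 'i * (Rintegral (@lebesgue_measure R) setT (fun k => complex.Im (h k)))%:C.

Definition normK (R : realType) (q : R) (f : KT R) : R :=
  Num.sqrt (complex.Re (innerK q f f)).

Definition eqK (R : realType) (f g : KT R) : Prop :=
  {ae @lebesgue_measure R, forall k, f.1 k = g.1 k /\ f.2 k = g.2 k}.

Definition addK (R : realType) (f g : KT R) : KT R :=
  (fun k => f.1 k + g.1 k, fun k => f.2 k + g.2 k).
Definition subK (R : realType) (f g : KT R) : KT R :=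
  (fun k => f.1 k - g.1 k, fun k => f.2 k - g.2 k).
Definition zeroK (R : realType) : KT R := (fun _ => 0, fun _ => 0).

Definition chi (R : realType) (s : \bar R) (k : R) : bool := (k%:E <= s)%E.

Definition P1 (R : realType) (s : \bar R) (f : KT R) : KT R :=
  (fun k => if chi s k then f.1 k else 0, fun _ => 0).
Definition P2 (R : realType) (s : \bar R) (f : KT R) : KT R :=
  (fun _ => 0, fun k => if chi s k then f.2 k else 0).

(* E(t), t in [-1/2, 1/2].  E(0) := lim_{t->0+} E(t), obtained by letting
   ln(2t)/q -> -oo in the formula for t > 0. *)
Definition Eop (R : realType) (q t : R) (f : KT R) : KT R :=
  if t < 0 then
    subK (P1 ((- @ln R (- (2 * t)) / q)%:E) f) (P1 ((@ln R (- (2 * t)) / q)%:E) f)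
  else if t == 0 then
    addK (subK (P2 -oo%E f) (P2 +oo%E f)) f
  else
    addK (subK (P2 ((@ln R (2 * t) / q)%:E) f) (P2 ((- @ln R (2 * t) / q)%:E) f)) f.

Definition Ival (R : realType) : set R := [set t | - (1 / 2) <= t <= 1 / 2].
Arguments Ival R : clear implicits.

Definition orth_proj (R : realType) (q : R) (A : KT R -> KT R) : Prop :=
  [/\ (forall f, Kmem q f -> Kmem q (A f)),
      (forall f, Kmem q f -> eqK (A (A f)) (A f)) &
      (forall f g, Kmem q f -> Kmem q g -> innerK q (A f) g = innerK q f (A g))].

Definition resolution_of_identity (R : realType) (q : R) (E : R -> KT R -> KT R) : Prop :=
  [/\ (forall t, Ival R t -> orth_proj q (E t)),
      (forall t s f, Ival R t -> Ival R s -> Kmem q f ->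
          eqK (E t (E s f)) (E (Order.min t s) f)),
      (forall s f, Ival R s -> Kmem q f ->
          (fun t => normK q (subK (E t f) (E s f)))
             @ within (Ival R) (at_right s) --> (0 : R)),
      (forall f, Kmem q f -> eqK (E (- (1 / 2)) f) (zeroK R)) &
      (forall f, Kmem q f -> eqK (E (1 / 2) f) f)].

Definition is_RS_integral (R : realType) (a b : R) (h F : R -> R[i]) (I : R[i]) : Prop :=
  forall eps : R, 0 < eps -> exists delta : R, 0 < delta /\
    forall (n : nat) (x c : nat -> R), x 0%N = a -> x n = b ->
      (forall i, (i < n)%N -> x i <= c i <= x i.+1 /\ x i.+1 - x i < delta) ->
      Num.sqrt (sqc ((\sum_(i < n) h (c i) * (F (x i.+1) - F (x i))) - I)) < eps.

From mathcomp Require Import all_boot all_order all_algebra.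
From mathcomp Require Import all_classical all_reals all_analysis.
From mathcomp Require Import complex ring lra.
From mathcomp Require Import measurable_realfun.
Import Order.TTheory GRing.Theory Num.Theory.
Local Open Scope ring_scope.
Local Open Scope complex_scope.
Local Open Scope classical_set_scope.
Import numFieldNormedType.Exports.
Set Implicit Arguments. Unset Strict Implicit. Unset Printing Implicit Defensive.

(* In Fourier variables, E(t) multiplies the two components of a density by
   the indicators of frequency sets band1 t and band2 t which grow with t, are
   empty at t = -1/2 and full at t = 1/2.  Multiplying by an indicator is an
   orthogonal projection of the weighted L^2 space K^{-1/2}_0, and monotonicity
   gives E(t)E(s) = E(min t s).  The Riemann-Stieltjes sums of 1 against
   t |-> <f, E(t)g> telescope to <f, g>.  For strong continuity at s: away from
   two frequencies the indicators are locally constant in t near s, so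
   ||E(t)f - E(s)f||^2 -> 0 by dominated convergence, with the weight of f as
   dominating function. *)

Lemma if0_subr (V : zmodType) (b1 b2 : bool) (z : V) : (b2 -> b1) ->
  (if b1 then z else 0) - (if b2 then z else 0) = if b1 && ~~ b2 then z else 0.
Proof. by case: b1; case: b2 => //= h; rewrite ?subrr ?subr0 //; move: (h isT). Qed.

Lemma if0_subrD (V : zmodType) (b1 b2 : bool) (z : V) : (b1 -> b2) ->
  (if b1 then z else 0) - (if b2 then z else 0) + z = if b1 || ~~ b2 then z else 0.
Proof.
by case: b1; case: b2 => //= h; rewrite ?subrr ?sub0r ?add0r ?addNr //; move: (h isT).
Qed.

Lemma min_andb d (T : orderType d) (P : T -> bool) (t s : T) :
  (forall x y, (x <= y)%O -> P x -> P y) -> P (Order.min t s) = P t && P s.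
Proof.
move=> P_up; have [ts|st] := leP t s.
  by case Pt: (P t) => //=; rewrite (P_up _ _ ts Pt).
by case Ps: (P s); rewrite ?andbT ?andbF // (P_up _ _ (ltW st) Ps).
Qed.

Section Squared_modulus.
Variable R : realType.

Lemma sqc_ge0 (z : R[i]) : 0 <= sqc z.
Proof. by rewrite /sqc addr_ge0 // sqr_ge0. Qed.

Lemma sqc0 : sqc (0 : R[i]) = 0.
Proof. by rewrite /sqc /= expr0n /= addr0. Qed.

Lemma sqcN (z : R[i]) : sqc (- z) = sqc z.
Proof. by case: z => a b; rewrite /sqc /= !sqrrN. Qed.

Lemma sqc_if_le (b : bool) (z : R[i]) : sqc (if b then z else 0) <= sqc z.
Proof. by case: b; rewrite ?sqc0 ?sqc_ge0. Qed.

Lemma sqc_ifB_le (b1 b2 : bool) (z : R[i]) :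
  sqc ((if b1 then z else 0) - (if b2 then z else 0)) <= sqc z.
Proof. by case: b1; case: b2; rewrite ?subrr ?subr0 ?sub0r ?sqcN ?sqc0 ?sqc_ge0. Qed.

End Squared_modulus.

Section Measurability.
Variable R : realType.

Lemma measurable_invr : measurable_fun [set: R] (@GRing.inv R).
Proof.
rewrite (_ : GRing.inv = fun x : R => if x == 0 then 0 else x^-1); last first.
  by apply/funext => x; case: eqP => // ->; rewrite invr0.
apply: measurable_fun_if => //; first exact: measurable_fun_eqr.
apply: (@measurable_funS _ _ _ _ [set x : R | x != 0]) => //.
- exact: open_measurable.
- by move=> x /= [_ /negbT].
- apply: open_continuous_measurable_fun => //; apply/in_setP => x /= x0.
  exact: inv_continuous.
Qed.

Variable q : R.

Lemma S1E : S1 q = fun k => (1 - expR (- (`|k| * q))) * (2 * `|k|)^-1.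
Proof.
by apply/funext => k; rewrite /S1; case: eqP => // ->; rewrite normr0 mulr0 invr0 mulr0.
Qed.

Lemma S2E : S2 q = fun k => (1 + expR (- (`|k| * q))) * (2 * `|k|)^-1.
Proof.
by apply/funext => k; rewrite /S2; case: eqP => // ->; rewrite normr0 mulr0 invr0 mulr0.
Qed.

Let measurable_expNq : measurable_fun [set: R] (fun k => expR (- (`|k| * q))).
Proof. by apply: measurableT_comp => //; apply: measurable_funN; apply: measurable_funM. Qed.

Let measurable_inv2abs : measurable_fun [set: R] (fun k => (2 * `|k|)^-1).
Proof. by apply: (measurableT_comp measurable_invr); apply: measurable_funM. Qed.

Lemma measurable_S1 : measurable_fun [set: R] (S1 q).
Proof.
rewrite S1E; apply: measurable_funM; last exact: measurable_inv2abs.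
by apply: measurable_funB => //; exact: measurable_expNq.
Qed.

Lemma measurable_S2 : measurable_fun [set: R] (S2 q).
Proof.
rewrite S2E; apply: measurable_funM; last exact: measurable_inv2abs.
by apply: measurable_funD => //; exact: measurable_expNq.
Qed.

End Measurability.

Section Masks.
Variables (R : realType) (q : R).
Hypothesis q_ge0 : 0 <= q.
Local Notation mu := (@lebesgue_measure R).

Definition mask (c1 c2 : R -> bool) (f : KT R) : KT R :=
  (fun k => if c1 k then f.1 k else 0, fun k => if c2 k then f.2 k else 0).

Definition measurableK (f : KT R) : Prop :=
  [/\ measurable_fun [set: R] (fun k => complex.Re (f.1 k)),
      measurable_fun [set: R] (fun k => complex.Im (f.1 k)),
      measurable_fun [set: R] (fun k => complex.Re (f.2 k)) &
      measurable_fun [set: R] (fun k => complex.Im (f.2 k))].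

Definition weightK (f : KT R) (k : R) : R :=
  S1 q k * sqc (f.1 k) + S2 q k * sqc (f.2 k).

Lemma mask_mask a1 a2 b1 b2 (f : KT R) : mask a1 a2 (mask b1 b2 f) =
  mask (fun k => a1 k && b1 k) (fun k => a2 k && b2 k) f.
Proof. by congr pair; apply/funext => k /=; case: (a1 k); case: (a2 k). Qed.

Lemma eqK_refl (f : KT R) : eqK f f.
Proof. by apply: aeW. Qed.

Lemma S1_ge0 k : 0 <= S1 q k.
Proof.
rewrite /S1; case: eqP => // _; apply: divr_ge0; last by rewrite mulr_ge0.
by rewrite subr_ge0 expR_le1 oppr_le0 mulr_ge0.
Qed.

Lemma S2_ge0 k : 0 <= S2 q k.
Proof. by rewrite /S2; case: eqP => // _; rewrite divr_ge0 ?mulr_ge0 ?addr_ge0 ?expR_ge0. Qed.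

Lemma weightK_ge0 f k : 0 <= weightK f k.
Proof. by rewrite addr_ge0 // mulr_ge0 // ?S1_ge0 ?S2_ge0 ?sqc_ge0. Qed.

Lemma measurable_sqc (z : R -> R[i]) :
  measurable_fun [set: R] (fun k => complex.Re (z k)) ->
  measurable_fun [set: R] (fun k => complex.Im (z k)) ->
  measurable_fun [set: R] (fun k => sqc (z k)).
Proof. by move=> mRe mIm; apply: measurable_funD; apply: measurable_funX. Qed.

Lemma measurable_weightK f : measurableK f -> measurable_fun [set: R] (weightK f).
Proof.
case=> m1 m2 m3 m4; apply: measurable_funD; apply: measurable_funM;
  by [exact: measurable_S1|exact: measurable_S2|exact: measurable_sqc].
Qed.

Lemma Kmem_measurable f : Kmem q f -> measurableK f.
Proof. by case. Qed.

Lemma measurable_if0 (c : R -> bool) (z : R -> R[i]) (p : R[i] -> R) : p 0 = 0 ->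
  measurable_fun [set: R] c -> measurable_fun [set: R] (fun k => p (z k)) ->
  measurable_fun [set: R] (fun k => p (if c k then z k else 0)).
Proof.
move=> p0 mc mz; rewrite (_ : (fun k => _) = fun k => if c k then p (z k) else 0).
  exact: measurable_fun_ifT.
by apply/funext => k; case: (c k).
Qed.

Lemma measurableK_mask c1 c2 f : measurable_fun [set: R] c1 ->
  measurable_fun [set: R] c2 -> measurableK f -> measurableK (mask c1 c2 f).
Proof. by move=> mc1 mc2 [m1 m2 m3 m4]; split; apply: measurable_if0. Qed.

Lemma measurableK_sub f g : measurableK f -> measurableK g -> measurableK (subK f g).
Proof.
have ReB (x y : R[i]) : complex.Re (x - y) = complex.Re x - complex.Re y.
  by case: x; case: y.
have ImB (x y : R[i]) : complex.Im (x - y) = complex.Im x - complex.Im y.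
  by case: x; case: y.
move=> [f1 f2 f3 f4] [g1 g2 g3 g4]; split => /=;
  [under eq_fun do rewrite ReB|under eq_fun do rewrite ImB
  |under eq_fun do rewrite ReB|under eq_fun do rewrite ImB];
  exact: measurable_funB.
Qed.

Lemma Kmem_mask c1 c2 f : measurable_fun [set: R] c1 -> measurable_fun [set: R] c2 ->
  Kmem q f -> Kmem q (mask c1 c2 f).
Proof.
move=> mc1 mc2 Kf; have mf := Kmem_measurable Kf.
have [m1 m2 m3 m4] := measurableK_mask mc1 mc2 mf.
split => //; case: Kf => _ _ _ _; apply: le_lt_trans; apply: ge0_le_integral => //.
- by move=> k _; rewrite lee_fin (weightK_ge0 (mask c1 c2 f)).
- by apply/measurable_EFinP; apply: (measurable_weightK (measurableK_mask mc1 mc2 mf)).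
- by apply/measurable_EFinP; apply: measurable_weightK.
- by move=> k _; rewrite lee_fin lerD // ler_wpM2l ?S1_ge0 ?S2_ge0 ?sqc_if_le.
Qed.

Lemma innerK_mask c1 c2 f g : innerK q (mask c1 c2 f) g = innerK q f (mask c1 c2 g).
Proof.
congr (_%:C + _ * _%:C); apply: eq_Rintegral => k _ /=; case: (c1 k); case: (c2 k);
  by move: (f.1 k) (f.2 k) (g.1 k) (g.2 k) => [? ?] [? ?] [? ?] [? ?] /=; ring.
Qed.

Lemma innerK0 f : innerK q f (zeroK R) = 0.
Proof.
have integrand0 (p : R[i] -> R) : p 0 = 0 -> (fun k => p ((S1 q k)%:C * (f.1 k * 0^*)
    + (S2 q k)%:C * (f.2 k * 0^*))) = fun=> 0.
  by move=> p0; apply/funext => k; rewrite conjC0 !mulr0 addr0.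
by rewrite /innerK /zeroK /= !integrand0 // Rintegral_cst // mul0r mulr0 addr0.
Qed.

Lemma normK_weightK f : normK q f = Num.sqrt (Rintegral mu [set: R] (weightK f)).
Proof.
have ReE (x y : R) : complex.Re (x%:C + 'i * y%:C) = x by rewrite /=; ring.
rewrite /normK /innerK ReE; congr Num.sqrt.
apply: eq_Rintegral => k _; rewrite /weightK /sqc.
by move: (f.1 k) (f.2 k) => [? ?] [? ?] /=; ring.
Qed.

End Masks.

Lemma cvg_nbhs_seq (R : realType) (V : normedModType R) (f : R -> V) (s : R) (l : V) :
  (forall u : nat -> R, u n @[n --> \oo] --> s -> f (u n) @[n --> \oo] --> l) ->
  f t @[t --> s] --> l.
Proof.
move=> f_seq; apply/cvgrPdist_lt => e e0; apply: contrapT => not_near.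
have /choice[u hu] : forall n : nat,
    exists t : R, `|s - t| < n.+1%:R^-1 /\ ~ `|l - f t| < e.
  move=> n; apply: contrapT => /forallNP no_t; apply: not_near.
  apply/nbhs_ballP; exists n.+1%:R^-1 => //= t st.
  by apply: contrapT => ft; apply: (no_t t).
have us : u n @[n --> \oo] --> s.
  apply/cvgrPdist_lt => r r0; apply: filterS (near_infty_natSinv_lt (PosNum r0)).
  by move=> n /= nr; apply: lt_trans (proj1 (hu n)) nr.
have /cvgrPdist_lt/(_ e e0)[N _ /(_ N (leqnn N))] := f_seq u us.
exact: (proj2 (hu N)).
Qed.

Section Dominated_convergence.
Context d (T : measurableType d) (R : realType).
Variable mu : {measure set T -> \bar R}.

Lemma Rintegral_dominated_cvg0 (phi : R -> T -> R) (g : T -> R) (s : R) :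
  (forall t, measurable_fun [set: T] (phi t)) ->
  mu.-integrable [set: T] (EFin \o g) ->
  (forall t x, 0 <= phi t x <= g x) ->
  {ae mu, forall x, \forall t \near s, phi t x = 0} ->
  Rintegral mu [set: T] (phi t) @[t --> s] --> 0.
Proof.
move=> mphi ig phi_g phi0; apply: cvg_nbhs_seq => u us.
have := @dominated_convergence _ _ _ mu [set: T] measurableT
  (fun n x => (phi (u n) x)%:E) (cst 0%E) (EFin \o g).
case.
- by move=> n; apply/measurable_EFinP.
- exact: measurable_cst.
- move: phi0; apply: filterS => x phix0 _.
  have phiu0 : \forall n \near \oo, phi (u n) x = 0.
    exact: (us _ phix0).
  by apply: cvg_near_cst; move: phiu0; apply: filterS => n /= ->.
- exact: ig.
- apply: aeW => x n _; have /andP[phi_ge0 phi_le] := phi_g (u n) x.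
  by rewrite abse_EFin lee_fin ger0_norm.
by move=> _ _; rewrite integral0; apply: fine_cvg.
Qed.

End Dominated_convergence.

Lemma near_cmp_eq (T : topologicalType) (R : realType) (f : T -> R) (s : T) (b : R) :
  {for s, continuous f} -> f s != b ->
  \forall t \near s, ((f t <= b) = (f s <= b)) /\ ((b <= f t) = (b <= f s)).
Proof.
move=> cf; case: ltgtP => // [fs_lt|fs_gt] _.
- have ft_lt : \forall t \near s, f t < b.
    exact: (cf _ (lt_nbhsl fs_lt)).
  apply: filterS ft_lt => t /= ft_lt.
  by rewrite (ltW ft_lt) leNgt ft_lt.
- have ft_gt : \forall t \near s, b < f t.
    exact: (cf _ (lt_nbhsr fs_gt)).
  apply: filterS ft_gt => t /= ft_gt.
  by rewrite (ltW ft_gt) leNgt ft_gt.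
Qed.

Lemma expR_neq_normr (R : realType) (x y : R) :
  expR x != `|y| -> expR x != y /\ expR x != - y.
Proof.
have ex_gt0 := expR_gt0 x.
move=> ex_ny; split; apply: contra ex_ny => /eqP ex_y; apply/eqP.
  by rewrite ex_y gtr0_norm // -ex_y.
by rewrite ex_y ltr0_norm // -oppr_gt0 -ex_y.
Qed.

Section Spectral_family.
Variables (R : realType) (q : R).
Hypothesis q_gt0 : 0 < q.
Local Notation mu := (@lebesgue_measure R).

(* [band1 t k] ([band2 t k]) says that E(t) keeps the first (second) component
   at frequency k.  Comparing exponentials instead of the thresholds
   -+ ln(-+2t)/q of the paper keeps these defined for every t. *)
Definition band1 (t k : R) : bool :=
  (- (2 * t) <= expR (- (q * k))) && (- (2 * t) < expR (q * k)).
Definition band2 (t k : R) : bool :=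
  (expR (q * k) <= 2 * t) || (expR (- (q * k)) < 2 * t).

Lemma chi_fin (x k : R) : chi x%:E k = (k <= x).
Proof. by rewrite /chi lee_fin. Qed.

Lemma le_ln_div (y k : R) : 0 < y -> (k <= ln y / q) = (expR (q * k) <= y).
Proof. by move=> y0; rewrite ler_pdivlMr // -[LHS]ler_expR lnK ?posrE // mulrC. Qed.

Lemma le_Nln_div (y k : R) : 0 < y -> (k <= - ln y / q) = (y <= expR (- (q * k))).
Proof. by move=> y0; rewrite ler_pdivlMr // lerNr -[LHS]ler_expR lnK ?posrE // mulrC. Qed.

Lemma ln_div_le_Nln_div (y : R) : 0 < y <= 1 -> ln y / q <= - ln y / q.
Proof.
case/andP=> y0 y1; have ln_le0 : ln y <= 0 by rewrite ln_le0.
by rewrite ler_pM2r ?invr_gt0 // (le_trans ln_le0) // oppr_ge0.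
Qed.

Lemma band1_ge0 t k : 0 <= t -> band1 t k.
Proof.
move=> t0; have t2_le0 : - (2 * t) <= 0 by rewrite oppr_le0 mulr_ge0.
by rewrite /band1 (le_trans t2_le0 (ltW (expR_gt0 _))) (le_lt_trans t2_le0 (expR_gt0 _)).
Qed.

Lemma band2_le0 t k : t <= 0 -> band2 t k = false.
Proof.
move=> t0; have t2_le0 : 2 * t <= 0 by rewrite mulr_ge0_le0.
by rewrite /band2 leNgt (le_lt_trans t2_le0 (expR_gt0 _)) ltNge
  (le_trans t2_le0 (ltW (expR_gt0 _))).
Qed.

Lemma Eop_lt0 t f : - (1 / 2) <= t < 0 -> Eop q t f = mask (band1 t) (band2 t) f.
Proof.
case/andP=> t_ge t_lt0; have y_gt0 : 0 < - (2 * t) by lra.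
have thr := @ln_div_le_Nln_div (- (2 * t)) ltac:(apply/andP; split; lra).
rewrite /Eop t_lt0 /mask; congr pair; apply/funext => k /=; last first.
  by rewrite subr0 band2_le0 // ltW.
rewrite !chi_fin if0_subr; last by move=> /le_trans; apply.
by rewrite le_Nln_div // le_ln_div // -ltNge.
Qed.

Lemma Eop_eq0 f : Eop q 0 f = mask (band1 0) (band2 0) f.
Proof.
rewrite /Eop ltxx eqxx /mask; congr pair; apply/funext => k /=.
  by rewrite band1_ge0 // subrr add0r.
by rewrite /chi leey band2_le0 //= sub0r addNr.
Qed.

Lemma Eop_gt0 t f : 0 < t <= 1 / 2 -> Eop q t f = mask (band1 t) (band2 t) f.
Proof.
case/andP=> t_gt0 t_le; have y_gt0 : 0 < 2 * t by lra.
have thr := @ln_div_le_Nln_div (2 * t) ltac:(apply/andP; split; lra).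
rewrite /Eop ltNge (ltW t_gt0) gt_eqF //= /mask; congr pair; apply/funext => k /=.
  by rewrite band1_ge0 ?ltW // subrr add0r.
rewrite !chi_fin if0_subrD; last by move=> /le_trans; apply.
by rewrite le_ln_div // le_Nln_div // -ltNge.
Qed.

Lemma Eop_mask t f : Ival R t -> Eop q t f = mask (band1 t) (band2 t) f.
Proof.
case/andP=> t_ge t_le; case: (ltgtP t 0) => [t_lt0|t_gt0|->].
- by apply: Eop_lt0; rewrite t_ge t_lt0.
- by apply: Eop_gt0; rewrite t_gt0 t_le.
- exact: Eop_eq0.
Qed.

Lemma band1_le t t' k : t <= t' -> band1 t k -> band1 t' k.
Proof.
by move=> tt' /andP[b1 b2]; apply/andP; split; [apply: le_trans b1|apply: le_lt_trans b2]; lra.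
Qed.

Lemma band2_le t t' k : t <= t' -> band2 t k -> band2 t' k.
Proof.
move=> tt' /orP[b1|b2]; apply/orP; [left; apply: (le_trans b1)|right; apply: (lt_le_trans b2)].
all: lra.
Qed.

Lemma measurable_band1 t : measurable_fun [set: R] (band1 t).
Proof.
apply: measurable_and; [apply: measurable_fun_ler|apply: measurable_fun_ltr] => //;
  apply: measurableT_comp => //; exact: measurable_funN.
Qed.

Lemma measurable_band2 t : measurable_fun [set: R] (band2 t).
Proof.
apply: measurable_or; [apply: measurable_fun_ler|apply: measurable_fun_ltr] => //;
  apply: measurableT_comp => //; exact: measurable_funN.
Qed.

Lemma Ival_min t s : Ival R t -> Ival R s -> Ival R (Order.min t s).
Proof. by move=> It Is; have [] := leP t s. Qed.

Lemma Eop_comp t s f : Ival R t -> Ival R s ->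
  Eop q t (Eop q s f) = Eop q (Order.min t s) f.
Proof.
move=> It Is; have Imin := Ival_min It Is.
rewrite !Eop_mask // mask_mask.
congr mask; apply/funext => k; symmetry.
  by apply: (min_andb (P := band1^~ k)) => x y; apply: band1_le.
by apply: (min_andb (P := band2^~ k)) => x y; apply: band2_le.
Qed.

Lemma Eop_lo f : Eop q (- (1 / 2)) f = zeroK R.
Proof.
rewrite Eop_mask; last by rewrite /Ival /=; apply/andP; split; lra.
congr pair; apply/funext => k; last by rewrite band2_le0 //; lra.
rewrite /band1 (_ : - (2 * - (1 / 2)) = 1 :> R); last lra.
rewrite -expR0 ler_expR ltr_expR; case: ifP => // /andP[? ?]; exfalso; lra.
Qed.

Lemma Eop_hi f : Eop q (1 / 2) f = f.
Proof.
rewrite Eop_mask; last by rewrite /Ival /=; apply/andP; split; lra.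
case: f => f1 f2; congr pair; apply/funext => k /=; first by rewrite band1_ge0 //; lra.
rewrite /band2 (_ : 2 * (1 / 2) = 1 :> R); last lra.
rewrite -expR0 ler_expR ltr_expR; case: ifP => // /negbT.
by rewrite negb_or -ltNge -leNgt => /andP[? ?]; exfalso; lra.
Qed.

Lemma band1E t k :
  band1 t k = (- expR (- (q * k)) <= 2 * t) && ~~ (2 * t <= - expR (q * k)).
Proof. by rewrite /band1 lerNl -ltNge ltrNl. Qed.

Lemma band2E t k :
  band2 t k = (expR (q * k) <= 2 * t) || ~~ (2 * t <= expR (- (q * k))).
Proof. by rewrite /band2 -ltNge. Qed.

Definition band_jumps (s : R) : set R := [set ln `|2 * s| / q; - (ln `|2 * s| / q)].

Lemma band_jumps_null s : mu (band_jumps s) = 0%E.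
Proof.
by rewrite /band_jumps null_set_setU //; exact: lebesgue_measure_set1.
Qed.

Lemma band_near s k : ~ band_jumps s k ->
  \forall t \near s, band1 t k = band1 s k /\ band2 t k = band2 s k.
Proof.
move=> k_jump.
have ex_neq x : x = q * k \/ x = - (q * k) -> expR x != `|2 * s|.
  move=> x_qk; apply: contra_notN k_jump => /eqP ex_2s; rewrite /band_jumps /=.
  rewrite -ex_2s expRK; case: x_qk => ->; rewrite ?mulNr (mulrC q) mulfK ?gt_eqF //;
    by [left|right; rewrite opprK].
have [ne1 ne1N] := expR_neq_normr (ex_neq _ (or_introl erefl)).
have [ne2 ne2N] := expR_neq_normr (ex_neq _ (or_intror erefl)).
pose cmp (b t : R) := (2 * t <= b, b <= 2 * t).
have near2 b : 2 * s != b -> \forall t \near s, cmp b t = cmp b s.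
  move=> sb; move: (near_cmp_eq (@mulrl_continuous R 2 s) sb).
  by apply: filterS => t [/= e1 e2]; rewrite /cmp e1 e2.
near=> t; rewrite !band1E !band2E.
have [-> _] : cmp (- expR (q * k)) t = cmp (- expR (q * k)) s.
  by near: t; apply: near2; rewrite -eqr_oppLR eq_sym.
have [_ ->] : cmp (- expR (- (q * k))) t = cmp (- expR (- (q * k))) s.
  by near: t; apply: near2; rewrite -eqr_oppLR eq_sym.
have [-> _] : cmp (expR (- (q * k))) t = cmp (expR (- (q * k))) s.
  by near: t; apply: near2; rewrite eq_sym.
have [_ ->] : cmp (expR (q * k)) t = cmp (expR (q * k)) s.
  by near: t; apply: near2; rewrite eq_sym.
by [].
Unshelve. all: by end_near.
Qed.

End Spectral_family.

Section Resolution.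
Variables (R : realType) (q : R).
Hypothesis q_gt0 : 0 < q.
Let q_ge0 : 0 <= q := ltW q_gt0.
Local Notation mu := (@lebesgue_measure R).

Lemma Eop_continuous s f : Ival R s -> Kmem q f ->
  (fun t => normK q (subK (Eop q t f) (Eop q s f))) @ within (Ival R) (nbhs s) --> 0.
Proof.
move=> Is Kf; have mf := Kmem_measurable Kf.
pose phi t := weightK q
  (subK (mask (band1 q t) (band2 q t) f) (mask (band1 q s) (band2 q s) f)).
have phi_cvg0 : Rintegral mu [set: R] (phi t) @[t --> s] --> 0.
  apply: (@Rintegral_dominated_cvg0 _ _ _ mu phi (weightK q f) s).
  - move=> t; apply: measurable_weightK; apply: measurableK_sub;
      by apply: measurableK_mask => //; [exact: measurable_band1|exact: measurable_band2].
  - apply/integrableP; split; first by apply/measurable_EFinP; exact: measurable_weightK.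
    case: Kf => _ _ _ _; apply: le_lt_trans; rewrite le_eqVlt; apply/orP; left.
    by apply/eqP/eq_integral => k _; rewrite gee0_abs // lee_fin weightK_ge0.
  - move=> t k; rewrite /phi weightK_ge0 //= /weightK /=.
    by rewrite lerD // ler_wpM2l ?S1_ge0 ?S2_ge0 ?sqc_ifB_le.
  - exists (band_jumps q s); split; [|exact: band_jumps_null|].
      by apply: measurableU; exact: measurable_set1.
    move=> k /= phi_not0; apply: contrapT => k_jump; apply: phi_not0.
    move: (band_near q_gt0 k_jump); apply: filterS => t [b1 b2].
    by rewrite /phi /weightK /= b1 b2 !subrr sqc0 !mulr0 addr0.
have norm_cvg0 : Num.sqrt (Rintegral mu [set: R] (phi t)) @[t --> s] --> 0.
  by rewrite -sqrtr0; apply: continuous_cvg phi_cvg0; exact: sqrt_continuous.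
have phiE : {near within (Ival R) (nbhs s),
    (fun t => Num.sqrt (Rintegral mu [set: R] (phi t))) =1
    (fun t => normK q (subK (Eop q t f) (Eop q s f)))}.
  suff : \forall t \near s, Ival R t -> Num.sqrt (Rintegral mu [set: R] (phi t)) =
    normK q (subK (Eop q t f) (Eop q s f)) by [].
  by near=> t => It; rewrite normK_weightK // !Eop_mask.
by apply: cvg_trans (near_eq_cvg phiE) _; exact: cvg_within_filter norm_cvg0.
Unshelve. all: by end_near.
Qed.

Lemma Eop_orth_proj t : Ival R t -> orth_proj q (Eop q t).
Proof.
move=> It; split => [f Kf|f Kf|f g Kf Kg].
- rewrite Eop_mask //; apply: Kmem_mask => //;
    [exact: measurable_band1|exact: measurable_band2].
- by rewrite Eop_comp // minxx; exact: eqK_refl.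
- by rewrite !Eop_mask //; exact: innerK_mask.
Qed.

Lemma Eop_resolution : resolution_of_identity q (Eop q).
Proof.
split.
- exact: Eop_orth_proj.
- by move=> t s f It Is Kf; rewrite Eop_comp //; exact: eqK_refl.
- move=> s f Is Kf P /(Eop_continuous Is Kf) near_P.
  exact: (@cvg_within _ (nbhs s) _ (fun u => s < u) _ near_P).
- by move=> f Kf; rewrite (Eop_lo q_gt0); exact: eqK_refl.
- by move=> f Kf; rewrite (Eop_hi q_gt0); exact: eqK_refl.
Qed.

End Resolution.

Lemma is_RS_integral_telescope (R : realType) (a b : R) (F : R -> R[i]) :
  is_RS_integral a b (fun=> 1) F (F b - F a).
Proof.
move=> e e_gt0; exists 1; split => // n x c x0 xn _.
under eq_bigr do rewrite mul1r.
rewrite -(big_mkord xpredT (fun i => F (x i.+1) - F (x i))) telescope_sumr // xn x0.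
by rewrite subrr sqc0 sqrtr0.
Qed.

Lemma qpar_gt0 (R : realType) (r Rad : R) : 0 < r -> r < Rad -> 0 < qpar r Rad.
Proof. by move=> r_gt0 r_lt; rewrite subr_gt0 !mul1r ltf_pV2 ?posrE; lra. Qed.

Unset Implicit Arguments.

Theorem proposition3p4 (R : realType) (r Rad : R) (hr : 0 < r) (hrR : r < Rad) :
  let q := qpar r Rad in
  resolution_of_identity q (Eop q)
  /\ (forall f g : KT R, Kmem q f -> Kmem q g ->
        is_RS_integral (- (1 / 2)) (1 / 2) (fun _ => 1)
          (fun t => innerK q f (Eop q t g)) (innerK q f g))
  /\ (forall (s : R) (f : KT R), Ival R s -> Kmem q f ->
        (fun t => normK q (subK (Eop q t f) (Eop q s f)))
           @ within (Ival R) (nbhs s) --> (0 : R)).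
Proof.
move=> q; have q_gt0 : 0 < q := qpar_gt0 hr hrR.
split; [exact: Eop_resolution|split => [f g Kf Kg|s f]; last exact: Eop_continuous].
have := is_RS_integral_telescope (- (1 / 2)) (1 / 2) (fun t => innerK q f (Eop q t g)).
by rewrite /= Eop_hi // Eop_lo // innerK0 subr0.
Qed.
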